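(* Let $f:\mathbb{R}^n\to\mathbb{R}\cup\{\infty\}$ be a proper lower semicontinuous function with $\bar x\in\operatorname{dom} f$ and $0\in\partial f(\bar x)$, and suppose $f$ is subdifferentially continuous, prox-regular, and twice epi-differentiable at $\bar x$ for $0$. Then $\bar x$ is a strong local minimizer of $f$ if and only if the sufficient condition of the second kind holds at $\bar x$, i.e., there exists $\kappa>0$ such that for each $w\in\operatorname{dom}D(\partial_p f)(\bar x|0)$ with $\|w\|=1$ there exists $z\in D(\partial_p f)(\bar x|0)(w)$ with $\langle z,w\rangle\ge\kappa$.
   Context: Limiting subdifferential $\partial f$, proximal subdifferential $\partial_p f(\bar x)=\{v\mid \liminf_{x\to\bar x}\frac{f(x)-f(\bar x)-\langle v,x-\bar x\rangle}{\|x-\bar x\|^2}>-\infty\}$. $D(\partial_p f)(\bar x|0)(w)=\{z\mid (w,z)\in T_{\operatorname{gph}\partial_p f}(\bar x,0)\}$ with $T$ the contingent cone $T_\Omega(\bar u)=\{v\mid \exists t_k\downarrow0,\ v_k\to v,\ \bar u+t_kv_k\in\Omega\}$. Prox-regularity at $\bar x$ for $\bar v$: there are $r,\varepsilon>0$ with $f(x)\ge f(u)+\langle v,x-u\rangle-\frac r2\|x-u\|^2$ for $x,u\in\mathbb{B}_\varepsilon(\bar x)$, $|f(u)-f(\bar x)|<\varepsilon$, $v\in\partial f(u)\cap\mathbb{B}_\varepsilon(\bar v)$. Subdifferential continuity: $(x_k,v_k)\to(\bar x,\bar v)$, $v_k\in\partial f(x_k)$ imply $f(x_k)\to f(\bar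 x)$. Twice epi-differentiability at $\bar x$ for $v$: for every $w$ and $\tau_k\downarrow0$ there are $w^k\to w$ with $\frac{f(\bar x+\tau_kw^k)-f(\bar x)-\tau_k\langle v,w^k\rangle}{\tau_k^2/2}\to d^2f(\bar x|v)(w)$, where $d^2f(\bar x|v)(w)=\liminf_{\tau\downarrow0,w'\to w}\frac{f(\bar x+\tau w')-f(\bar x)-\tau\langle v,w'\rangle}{\tau^2/2}$. Strong local minimizer: $f(x)-f(\bar x)\ge\frac\kappa2\|x-\bar x\|^2$ near $\bar x$ for some $\kappa>0$. *)

From Stdlib Require Import Reals.
From Stdlib Require Vectors.Fin.
Open Scope R_scope.

Definition vec (n : nat) : Type := Fin.t n -> R.

Fixpoint fsum (n : nat) : (Fin.t n -> R) -> R :=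
  match n return (Fin.t n -> R) -> R with
  | O => fun _ => 0
  | S m => fun g => g Fin.F1 + fsum m (fun i => g (Fin.FS i))
  end.

Definition vzero {n} : vec n := fun _ => 0.
Definition vadd {n} (x y : vec n) : vec n := fun i => x i + y i.
Definition vsub {n} (x y : vec n) : vec n := fun i => x i - y i.
Definition vscal {n} (a : R) (x : vec n) : vec n := fun i => a * x i.
Definition dot {n} (x y : vec n) : R := fsum n (fun i => x i * y i).
Definition vnorm {n} (x : vec n) : R := sqrt (dot x x).

Definition vcv {n} (u : nat -> vec n) (l : vec n) : Prop :=
  forall eps, 0 < eps -> exists N, forall k, (N <= k)%nat -> vnorm (vsub (u k) l) < eps.

Definition pos_dec_to0 (t : nat -> R) : Prop :=
  (forall k, 0 < t k) /\ (forall k, t (S k) <= t k) /\ Un_cv t 0.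

(* values of f : R U {+oo} *)
Inductive ereal : Type := EFin (r : R) | EInf.
Inductive xreal : Type := XFin (r : R) | XPInf | XMInf.

Definition ege (a : ereal) (r : R) : Prop :=
  match a with EFin x => r <= x | EInf => True end.
Definition egt (a : ereal) (r : R) : Prop :=
  match a with EFin x => r < x | EInf => True end.
Definition elt (a : ereal) (r : R) : Prop :=
  match a with EFin x => x < r | EInf => False end.
Definition xgt (a : xreal) (r : R) : Prop :=
  match a with XFin x => r < x | XPInf => True | XMInf => False end.
Definition xlt (a : xreal) (r : R) : Prop :=
  match a with XFin x => x < r | XPInf => False | XMInf => True end.

Definition ecv_real (a : nat -> ereal) (l : R) : Prop :=
  forall eps, 0 < eps -> exists N, forall k, (N <= k)%nat ->
    exists r, a k = EFin r /\ Rabs (r - l) < eps.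

Definition ecv_x (a : nat -> ereal) (l : xreal) : Prop :=
  match l with
  | XFin r => ecv_real a r
  | XPInf => forall M, exists N, forall k, (N <= k)%nat -> egt (a k) M
  | XMInf => forall M, exists N, forall k, (N <= k)%nat -> elt (a k) M
  end.

Definition proper {n} (f : vec n -> ereal) : Prop := exists x, f x <> EInf.

Definition in_dom {n} (f : vec n -> ereal) (x : vec n) : Prop := exists r, f x = EFin r.

Definition lsc {n} (f : vec n -> ereal) : Prop :=
  forall x (a : R), egt (f x) a ->
    exists delta, 0 < delta /\ forall y, vnorm (vsub y x) < delta -> egt (f y) a.

Definition reg_subdiff {n} (f : vec n -> ereal) (x v : vec n) : Prop :=
  exists fx, f x = EFin fx /\
  forall eps, 0 < eps -> exists delta, 0 < delta /\
    forall y, vnorm (vsub y x) < delta ->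
      ege (f y) (fx + dot v (vsub y x) - eps * vnorm (vsub y x)).

Definition lim_subdiff {n} (f : vec n -> ereal) (x v : vec n) : Prop :=
  exists fx, f x = EFin fx /\
  exists (xk vk : nat -> vec n),
    vcv xk x /\ vcv vk v /\ ecv_real (fun k => f (xk k)) fx /\
    forall k, reg_subdiff f (xk k) (vk k).

(* proximal subdifferential: the liminf of the quotient is > -oo *)
Definition prox_subdiff {n} (f : vec n -> ereal) (x v : vec n) : Prop :=
  exists fx, f x = EFin fx /\
  exists M delta, 0 < delta /\
    forall y, 0 < vnorm (vsub y x) < delta ->
      ege (f y) (fx + dot v (vsub y x) - M * (vnorm (vsub y x))^2).

(* (w, z) in the contingent cone to gph d_p f at (xbar, vbar), i.e.
   z in D(d_p f)(xbar | vbar)(w) *)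
Definition graph_deriv_prox {n} (f : vec n -> ereal) (xbar vbar w z : vec n) : Prop :=
  exists (t : nat -> R) (wk zk : nat -> vec n),
    pos_dec_to0 t /\ vcv wk w /\ vcv zk z /\
    forall k, prox_subdiff f (vadd xbar (vscal (t k) (wk k)))
                             (vadd vbar (vscal (t k) (zk k))).

Definition dom_graph_deriv_prox {n} (f : vec n -> ereal) (xbar vbar w : vec n) : Prop :=
  exists z, graph_deriv_prox f xbar vbar w z.

Definition prox_regular {n} (f : vec n -> ereal) (xbar vbar : vec n) : Prop :=
  exists fx, f xbar = EFin fx /\
  exists r eps, 0 < r /\ 0 < eps /\
    forall x u v fu,
      vnorm (vsub x xbar) <= eps -> vnorm (vsub u xbar) <= eps ->
      f u = EFin fu -> Rabs (fu - fx) < eps ->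
      lim_subdiff f u v -> vnorm (vsub v vbar) <= eps ->
      ege (f x) (fu + dot v (vsub x u) - r / 2 * (vnorm (vsub x u))^2).

Definition subdiff_continuous {n} (f : vec n -> ereal) (xbar vbar : vec n) : Prop :=
  exists fx, f xbar = EFin fx /\
  forall (xk vk : nat -> vec n),
    vcv xk xbar -> vcv vk vbar -> (forall k, lim_subdiff f (xk k) (vk k)) ->
    ecv_real (fun k => f (xk k)) fx.

Definition q2 {n} (f : vec n -> ereal) (xbar v : vec n) (fx tau : R) (w : vec n) : ereal :=
  match f (vadd xbar (vscal tau w)) with
  | EFin y => EFin ((y - fx - tau * dot v w) / (tau ^ 2 / 2))
  | EInf => EInf
  end.

(* a = d^2 f(xbar | v)(w) = liminf_{tau -> 0+, w' -> w} q2 tau w' *)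
Definition is_d2 {n} (f : vec n -> ereal) (xbar v : vec n) (fx : R) (w : vec n) (a : xreal) : Prop :=
  (forall b : R, xgt a b -> exists delta, 0 < delta /\
      forall tau w', 0 < tau < delta -> vnorm (vsub w' w) < delta ->
        egt (q2 f xbar v fx tau w') b) /\
  (forall b : R, xlt a b -> forall delta, 0 < delta ->
      exists tau w', 0 < tau < delta /\ vnorm (vsub w' w) < delta /\
        elt (q2 f xbar v fx tau w') b).

Definition twice_epi_diff {n} (f : vec n -> ereal) (xbar v : vec n) : Prop :=
  exists fx, f xbar = EFin fx /\
  forall (w : vec n) (a : xreal), is_d2 f xbar v fx w a ->
    forall tau : nat -> R, pos_dec_to0 tau ->
      exists wk : nat -> vec n, vcv wk w /\
        ecv_x (fun k => q2 f xbar v fx (tau k) (wk k)) a.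

Definition strong_local_min {n} (f : vec n -> ereal) (xbar : vec n) : Prop :=
  exists fx, f xbar = EFin fx /\
  exists kappa delta, 0 < kappa /\ 0 < delta /\
    forall x, vnorm (vsub x xbar) < delta ->
      ege (f x) (fx + kappa / 2 * (vnorm (vsub x xbar))^2).

From Stdlib Require Import Reals Lra Lia Psatz Classical ClassicalEpsilon FunctionalExtensionality.
Open Scope R_scope.

(* The heart of the
   proof is an identity: whenever [z] belongs to the graphical derivative
   [D(d_p f)(xbar|0)(w)], the second subderivative [d^2 f(xbar|0)(w)] is the
   real number [<z, w>] ([d2_eq_dot_of_graph]).  It comes from rescaling the
   prox-regularity inequality along a sequence realizing [(w, z)]
   ([graph_quotient_bound]) and comparing with recovery sequences provided by
   twice epi-differentiability.
   - Necessity: a strong minimizer with modulus [kappa] has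
     [d^2 f(xbar|0)(w) >= kappa |w|^2] ([d2_quadratic_minorant]).
   - Sufficiency, by contradiction: points [x0] near [xbar] with
     [f x0 < f xbar + c |x0 - xbar|^2] are moved by a proximal-point step
     (minimizing [f + L/2 |. - x0|^2] over a ball) to points carrying
     proximal subgradients of size [O(|u - xbar|)]; rescaling and extracting
     ([graph_pair_of_sequence]) yields a unit direction [w0] with a
     graphical-derivative pair along which the quotients stay below
     [8 c < kappa], against [d^2 f(xbar|0)(w0) = <z1, w0> >= kappa]. *)

(** * Euclidean geometry of [vec n] *)

Lemma fsum_ext n (g h : Fin.t n -> R) : (forall i, g i = h i) -> fsum n g = fsum n h.
Proof.
  induction n as [|n IH]; intros H; simpl; [reflexivity|].
  rewrite H, (IH (fun i => g (Fin.FS i)) (fun i => h (Fin.FS i))); auto.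
Qed.

Lemma fsum_lin n a (g h : Fin.t n -> R) :
  fsum n (fun i => g i + a * h i) = fsum n g + a * fsum n h.
Proof.
  induction n as [|n IH]; simpl; [ring|].
  rewrite (IH (fun i => g (Fin.FS i)) (fun i => h (Fin.FS i))). ring.
Qed.

Lemma fsum_le n (g h : Fin.t n -> R) : (forall i, g i <= h i) -> fsum n g <= fsum n h.
Proof.
  induction n as [|n IH]; intros H; simpl; [lra|].
  pose proof (H Fin.F1). pose proof (IH (fun i => g (Fin.FS i)) (fun i => h (Fin.FS i)) (fun i => H _)).
  lra.
Qed.

Lemma fsum_zero n : fsum n (fun _ => 0) = 0.
Proof. induction n as [|n IH]; simpl; [|rewrite IH]; ring. Qed.

Lemma fsum_term n (g : Fin.t n -> R) j : (forall i, 0 <= g i) -> g j <= fsum n g.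
Proof.
  intros Hg. assert (Hpos : forall m (h : Fin.t m -> R), (forall i, 0 <= h i) -> 0 <= fsum m h).
  { intros m h Hh. rewrite <- (fsum_zero m). apply fsum_le; auto. }
  induction j as [n|n j IH]; simpl.
  - pose proof (Hpos n (fun i => g (Fin.FS i)) (fun i => Hg _)). lra.
  - pose proof (Hg Fin.F1). pose proof (IH (fun i => g (Fin.FS i)) (fun i => Hg _)). lra.
Qed.

Lemma vec_eq n (x y : vec n) : (forall i, x i = y i) -> x = y.
Proof. apply functional_extensionality. Qed.

Lemma dot_sym n (x y : vec n) : dot x y = dot y x.
Proof. apply fsum_ext; intros; ring. Qed.

Lemma dot_addl n (x y z : vec n) : dot (vadd x y) z = dot x z + dot y z.
Proof.
  unfold dot, vadd. rewrite <- (Rmult_1_l (fsum n (fun i => y i * z i))), <- fsum_lin.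
  apply fsum_ext; intros; ring.
Qed.

Lemma dot_scall n a (x z : vec n) : dot (vscal a x) z = a * dot x z.
Proof.
  unfold dot, vscal. rewrite <- (Rplus_0_l (a * fsum n _)).
  rewrite <- (fsum_zero n) at 1. rewrite <- fsum_lin. apply fsum_ext; intros; ring.
Qed.

Lemma dot_addr n (x y z : vec n) : dot z (vadd x y) = dot z x + dot z y.
Proof. rewrite dot_sym, dot_addl, (dot_sym _ x), (dot_sym _ y). reflexivity. Qed.

Lemma dot_scalr n a (x z : vec n) : dot z (vscal a x) = a * dot z x.
Proof. rewrite dot_sym, dot_scall, dot_sym. reflexivity. Qed.

Lemma dot_zerol n (x : vec n) : dot vzero x = 0.
Proof.
  transitivity (fsum n (fun _ => 0)); [apply fsum_ext; intros; unfold vzero; ring|apply fsum_zero].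
Qed.

Lemma dot_pos n (x : vec n) : 0 <= dot x x.
Proof. rewrite <- (fsum_zero n). apply fsum_le. intros; nra. Qed.

Lemma vnorm_pos n (x : vec n) : 0 <= vnorm x.
Proof. apply sqrt_pos. Qed.

Lemma vnorm_sq n (x : vec n) : (vnorm x)^2 = dot x x.
Proof. unfold vnorm. rewrite pow2_sqrt; auto using dot_pos. Qed.

Lemma vnorm_scal n a (x : vec n) : vnorm (vscal a x) = Rabs a * vnorm x.
Proof.
  unfold vnorm. rewrite dot_scall, dot_scalr, <- Rmult_assoc.
  change (a * a) with (Rsqr a). rewrite sqrt_mult_alt, sqrt_Rsqr_abs; auto using Rle_0_sqr.
Qed.

Lemma vnorm_zero n : vnorm (@vzero n) = 0.
Proof. unfold vnorm. rewrite dot_zerol. apply sqrt_0. Qed.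

Lemma coord_le n (x : vec n) i : Rabs (x i) <= vnorm x.
Proof.
  unfold vnorm. rewrite <- sqrt_Rsqr_abs. apply sqrt_le_1_alt.
  apply (fsum_term n (fun i => x i * x i)). intros; nra.
Qed.

Lemma vnorm0_eq n (x y : vec n) : vnorm (vsub x y) = 0 -> x = y.
Proof.
  intros H. apply vec_eq. intros i. pose proof (coord_le _ (vsub x y) i) as Hi.
  rewrite H in Hi. unfold vsub in Hi. pose proof (Rabs_pos (x i - y i)).
  destruct (Req_dec (x i - y i) 0) as [E|E]; [lra|].
  apply Rabs_no_R0 in E. lra.
Qed.

(* Cauchy-Schwarz: the quadratic [t |-> |x + t y|^2] is nonnegative, so its
   discriminant is nonpositive. *)
Lemma cauchy_schwarz_sq n (x y : vec n) : dot x y * dot x y <= dot x x * dot y y.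
Proof.
  assert (Hq : forall t, 0 <= dot x x + 2 * t * dot x y + t * t * dot y y).
  { intros t. pose proof (dot_pos _ (vadd x (vscal t y))) as P.
    rewrite !dot_addl, !dot_addr, !dot_scall, !dot_scalr, (dot_sym _ y x) in P. lra. }
  pose proof (dot_pos _ x). pose proof (dot_pos _ y).
  destruct (Req_dec (dot y y) 0) as [Z|Z].
  - destruct (Req_dec (dot x y) 0) as [Z'|Z']; [rewrite Z', Z; lra|].
    specialize (Hq (- (dot x x + 1) / (2 * dot x y))). rewrite Z in Hq.
    replace (2 * (- (dot x x + 1) / (2 * dot x y)) * dot x y) with (- (dot x x + 1)) in Hq
      by (field; auto). lra.
  - specialize (Hq (- dot x y / dot y y)).
    replace (dot x x + 2 * (- dot x y / dot y y) * dot x y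
             + - dot x y / dot y y * (- dot x y / dot y y) * dot y y)
      with ((dot x x * dot y y - dot x y * dot x y) / dot y y) in Hq by (field; auto).
    assert (0 < / dot y y) by (apply Rinv_0_lt_compat; lra).
    unfold Rdiv in Hq. nra.
Qed.

Lemma cauchy_schwarz n (x y : vec n) : Rabs (dot x y) <= vnorm x * vnorm y.
Proof.
  unfold vnorm. rewrite <- sqrt_mult_alt, <- sqrt_Rsqr_abs by apply dot_pos.
  apply sqrt_le_1_alt, cauchy_schwarz_sq.
Qed.

Lemma vnorm_triangle n (x y z : vec n) : vnorm (vsub x z) <= vnorm (vsub x y) + vnorm (vsub y z).
Proof.
  set (a := vsub x y). set (b := vsub y z).
  assert (E : vsub x z = vadd a b) by (apply vec_eq; intros; unfold a, b, vadd, vsub; ring).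
  rewrite E. apply Rsqr_incr_0_var; [|apply Rplus_le_le_0_compat; apply vnorm_pos].
  unfold Rsqr.
  pose proof (vnorm_sq _ (vadd a b)) as Eab. pose proof (vnorm_sq _ a) as Ea. pose proof (vnorm_sq _ b) as Eb.
  rewrite !dot_addl, !dot_addr, (dot_sym _ b a) in Eab.
  pose proof (cauchy_schwarz _ a b). pose proof (Rle_abs (dot a b)). nra.
Qed.

Lemma vnorm_sym n (x y : vec n) : vnorm (vsub x y) = vnorm (vsub y x).
Proof.
  replace (vsub x y) with (vscal (-1) (vsub y x)) by (apply vec_eq; intros; unfold vsub, vscal; ring).
  rewrite vnorm_scal, Rabs_left by lra. ring.
Qed.

Lemma seq_choice (A : Type) (P : nat -> A -> Prop) :
  (forall k, exists a, P k a) -> exists s : nat -> A, forall k, P k (s k).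
Proof.
  intros H. exists (fun k => proj1_sig (constructive_indefinite_description _ (H k))).
  intros k. exact (proj2_sig (constructive_indefinite_description _ (H k))).
Qed.

Lemma eventually_and (P Q : nat -> Prop) :
  (exists N, forall k, (N <= k)%nat -> P k) -> (exists N, forall k, (N <= k)%nat -> Q k) ->
  exists N, forall k, (N <= k)%nat -> P k /\ Q k.
Proof. intros [N1 H1] [N2 H2]. exists (max N1 N2). intros k Hk. split; [apply H1|apply H2]; lia. Qed.

Lemma Un_cv_const c : Un_cv (fun _ => c) c.
Proof. intros eps He. exists 0%nat. intros. unfold Rdist. rewrite Rminus_diag, Rabs_R0. lra. Qed.

Lemma Un_cv_ext (u v : nat -> R) l : (forall k, u k = v k) -> Un_cv u l -> Un_cv v l.
Proof. intros H C eps He. destruct (C eps He) as [N HN]. exists N. intros k Hk. rewrite <- H. auto. Qed.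

Lemma Un_cv_ge (X : nat -> R) L b :
  Un_cv X L -> (exists N, forall k, (N <= k)%nat -> b <= X k) -> b <= L.
Proof.
  intros C [N HN]. destruct (Rle_lt_dec b L) as [h|h]; auto.
  destruct (C (b - L)) as [M HM]; [lra|]. specialize (HM (max N M) ltac:(lia)).
  specialize (HN (max N M) ltac:(lia)). unfold Rdist in HM. apply Rabs_def2 in HM. lra.
Qed.

Lemma Un_cv_le (X : nat -> R) L b :
  Un_cv X L -> (exists N, forall k, (N <= k)%nat -> X k <= b) -> L <= b.
Proof.
  intros C [N HN]. apply Ropp_le_cancel, (Un_cv_ge (fun k => - X k)).
  - apply (Un_cv_ext (fun k => -1 * X k)); [intros; ring|].
    replace (- L) with (-1 * L) by ring. apply CV_mult; auto using Un_cv_const.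
  - exists N. intros k Hk. specialize (HN k Hk). lra.
Qed.

Lemma Rle_cv_lim_eventually (X Y : nat -> R) L M :
  Un_cv X L -> Un_cv Y M -> (exists N, forall k, (N <= k)%nat -> X k <= Y k) -> L <= M.
Proof.
  intros CX CY [N HN]. apply Rminus_le, (Un_cv_le (fun k => X k - Y k)).
  - apply CV_minus; auto.
  - exists N. intros k Hk. specialize (HN k Hk). lra.
Qed.

Lemma Un_cv_eventually_gt (X : nat -> R) L b :
  Un_cv X L -> b < L -> exists N, forall k, (N <= k)%nat -> b < X k.
Proof.
  intros C h. destruct (C (L - b)) as [M HM]; [lra|]. exists M. intros k Hk.
  specialize (HM k Hk). unfold Rdist in HM. apply Rabs_def2 in HM. lra.
Qed.

Lemma Un_cv_eventually_lt (X : nat -> R) L b :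
  Un_cv X L -> L < b -> exists N, forall k, (N <= k)%nat -> X k < b.
Proof.
  intros C h. destruct (C (b - L)) as [M HM]; [lra|]. exists M. intros k Hk.
  specialize (HM k Hk). unfold Rdist in HM. apply Rabs_def2 in HM. lra.
Qed.

Lemma Un_cv_squeeze (X Y : nat -> R) L :
  (forall k, Rabs (X k - L) <= Y k) -> Un_cv Y 0 -> Un_cv X L.
Proof.
  intros H C eps He. destruct (C eps He) as [N HN]. exists N. intros k Hk. specialize (HN k Hk).
  unfold Rdist in *. rewrite Rminus_0_r in HN. pose proof (H k). pose proof (Rle_abs (Y k)). lra.
Qed.

Lemma Un_cv_inv : Un_cv (fun k => / (INR k + 1)) 0.
Proof.
  intros eps He. destruct (archimed_cor1 eps He) as [N [HN1 HN2]]. exists N. intros k Hk.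
  unfold Rdist. rewrite Rminus_0_r. pose proof (pos_INR k).
  rewrite Rabs_pos_eq by (left; apply Rinv_0_lt_compat; lra).
  apply Rle_lt_trans with (/ INR N); auto. apply Rinv_le_contravar.
  - apply lt_0_INR. lia.
  - apply le_INR in Hk. lra.
Qed.

Definition incr (phi : nat -> nat) : Prop := forall k, (phi k < phi (S k))%nat.

Lemma incr_mono phi : incr phi -> forall j k, (j <= k)%nat -> (phi j <= phi k)%nat.
Proof. intros H j k Hjk. induction Hjk as [|m _ IH]; [lia|]. specialize (H m). lia. Qed.

Lemma incr_ge phi : incr phi -> forall k, (k <= phi k)%nat.
Proof. intros H k. induction k as [|k IH]; [lia|]. specialize (H k). lia. Qed.

Lemma incr_comp phi psi : incr phi -> incr psi -> incr (fun k => phi (psi k)).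
Proof.
  intros H1 H2 k. specialize (H2 k).
  pose proof (incr_mono phi H1 (S (psi k)) (psi (S k)) H2). specialize (H1 (psi k)). lia.
Qed.

Lemma Un_cv_subseq (u : nat -> R) l phi : incr phi -> Un_cv u l -> Un_cv (fun k => u (phi k)) l.
Proof.
  intros H C eps He. destruct (C eps He) as [N HN]. exists N. intros k Hk.
  apply HN. pose proof (incr_ge phi H k). lia.
Qed.

Lemma fsum_cv n (g : nat -> Fin.t n -> R) (G : Fin.t n -> R) :
  (forall i, Un_cv (fun k => g k i) (G i)) -> Un_cv (fun k => fsum n (g k)) (fsum n G).
Proof.
  revert g G. induction n as [|n IH]; intros g G H; simpl.
  - apply Un_cv_const.
  - apply CV_plus; [apply H|apply (IH (fun k i => g k (Fin.FS i)))]. intros; apply H.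
Qed.

Lemma vcv_dist n (u : nat -> vec n) l :
  vcv u l <-> Un_cv (fun k => vnorm (vsub (u k) l)) 0.
Proof.
  split; intros C eps He; destruct (C eps He) as [N HN]; exists N; intros k Hk;
    specialize (HN k Hk); unfold Rdist in *; rewrite Rminus_0_r, Rabs_pos_eq in * by apply vnorm_pos;
    exact HN.
Qed.

Lemma vcv_coord n (u : nat -> vec n) l : vcv u l -> forall i, Un_cv (fun k => u k i) (l i).
Proof.
  intros C i eps He. destruct (C eps He) as [N HN]. exists N. intros k Hk.
  pose proof (coord_le _ (vsub (u k) l) i). specialize (HN k Hk). unfold vsub at 1 in H. unfold Rdist. lra.
Qed.

Lemma coord_vcv n (u : nat -> vec n) l : (forall i, Un_cv (fun k => u k i) (l i)) -> vcv u l.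
Proof.
  intros H. apply vcv_dist.
  assert (Hd : Un_cv (fun k => dot (vsub (u k) l) (vsub (u k) l)) (fsum n (fun _ => 0))).
  { apply (fsum_cv n (fun k i => vsub (u k) l i * vsub (u k) l i)). intros i.
    replace 0 with ((l i - l i) * (l i - l i)) by ring. unfold vsub.
    apply CV_mult; apply CV_minus; auto using Un_cv_const. }
  rewrite fsum_zero in Hd. rewrite <- sqrt_0.
  apply (continuity_seq sqrt _ 0); auto. apply continuity_pt_sqrt. lra.
Qed.

Lemma vcv_const n (c : vec n) : vcv (fun _ => c) c.
Proof. apply coord_vcv. intros; apply Un_cv_const. Qed.

Lemma vcv_subseq n (u : nat -> vec n) l phi : incr phi -> vcv u l -> vcv (fun k => u (phi k)) l.
Proof.
  intros H C. apply coord_vcv. intros i. apply (Un_cv_subseq (fun k => u k i)); auto.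
  apply vcv_coord; auto.
Qed.

Lemma vcv_sub n (a b : nat -> vec n) A B :
  vcv a A -> vcv b B -> vcv (fun k => vsub (a k) (b k)) (vsub A B).
Proof. intros Ha Hb. apply coord_vcv. intros i. unfold vsub. apply CV_minus; apply vcv_coord; auto. Qed.

Lemma vcv_scal n (a : nat -> vec n) A s : vcv a A -> vcv (fun k => vscal s (a k)) (vscal s A).
Proof. intros Ha. apply coord_vcv. intros i. unfold vscal. apply CV_mult; [apply Un_cv_const|apply vcv_coord; auto]. Qed.

Lemma dot_cv n (a b : nat -> vec n) A B :
  vcv a A -> vcv b B -> Un_cv (fun k => dot (a k) (b k)) (dot A B).
Proof.
  intros Ha Hb. apply (fsum_cv n (fun k i => a k i * b k i)). intros i.
  apply CV_mult; apply vcv_coord; auto.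
Qed.

Lemma vnorm_cv n (a : nat -> vec n) A : vcv a A -> Un_cv (fun k => vnorm (a k)) (vnorm A).
Proof.
  intros C. apply (continuity_seq sqrt (fun k => dot (a k) (a k))).
  - apply continuity_pt_sqrt, dot_pos.
  - apply dot_cv; auto.
Qed.

Lemma vcv_ray n (xbar : vec n) (t : nat -> R) (wk : nat -> vec n) w :
  Un_cv t 0 -> vcv wk w -> vcv (fun k => vadd xbar (vscal (t k) (wk k))) xbar.
Proof.
  intros Ht Hw. apply coord_vcv. intros i. unfold vadd, vscal.
  pose proof (CV_plus _ _ _ _ (Un_cv_const (xbar i)) (CV_mult _ _ _ _ Ht (vcv_coord _ _ _ Hw i))) as C.
  rewrite Rmult_0_l, Rplus_0_r in C. exact C.
Qed.

(** * Compactness: extraction of convergent subsequences *)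

Lemma extract_incr (R : nat -> nat -> nat -> Prop) :
  (forall k p, exists q, (p < q)%nat /\ R k p q) ->
  exists phi, incr phi /\ forall k, R k (phi k) (phi (S k)).
Proof.
  intros H.
  destruct (seq_choice (nat -> nat) (fun k g => forall p, (p < g p)%nat /\ R k p (g p))) as [g Hg].
  { intros k. apply (seq_choice nat (fun p q => (p < q)%nat /\ R k p q)), H. }
  exists (nat_rect (fun _ => nat) 0%nat (fun k p => g k p)). split; intros k; apply Hg.
Qed.

Lemma bolzano_weierstrass_R (u : nat -> R) M :
  (forall k, Rabs (u k) <= M) -> exists phi l, incr phi /\ Un_cv (fun k => u (phi k)) l.
Proof.
  intros HM.
  destruct (Bolzano_Weierstrass u (fun c => -M <= c <= M) (compact_P3 (-M) M)) as [l Hl].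
  { intros k. specialize (HM k). pose proof (Rle_abs (u k)). pose proof (Rle_abs (- u k)). rewrite Rabs_Ropp in *. lra. }
  destruct (extract_incr (fun k _ q => Rabs (u q - l) < / (INR k + 1))) as [phi [Hphi Hclose]].
  { intros k p. assert (hp : 0 < / (INR k + 1)) by (apply Rinv_0_lt_compat; pose proof (pos_INR k); lra).
    destruct (Hl (disc l (mkposreal _ hp)) (S p)) as [q [Hq1 Hq2]].
    - exists (mkposreal _ hp). intros y Hy. exact Hy.
    - exists q. split; [lia|exact Hq2]. }
  exists (fun k => phi (S k)), l. split.
  - intros k. apply Hphi.
  - apply (Un_cv_squeeze _ _ _ (fun k => Rlt_le _ _ (Hclose k)) Un_cv_inv).
Qed.

Lemma bolzano_weierstrass n (a : nat -> vec n) M :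
  (forall k, vnorm (a k) <= M) -> exists phi l, incr phi /\ vcv (fun k => a (phi k)) l.
Proof.
  revert a. induction n as [|n IH]; intros a HM.
  - exists (fun k => k), vzero. split; [intros k; lia|].
    apply coord_vcv. intros i. apply (Fin.case0 (fun _ => _) i).
  - destruct (bolzano_weierstrass_R (fun k => a k Fin.F1) M) as [phi1 [l0 [Hp1 Hc1]]].
    { intros k. eapply Rle_trans; [apply coord_le|apply HM]. }
    destruct (IH (fun k i => a (phi1 k) (Fin.FS i))) as [phi2 [l' [Hp2 Hc2]]].
    { intros k. eapply Rle_trans; [|apply (HM (phi1 k))]. apply sqrt_le_1_alt.
      unfold dot. simpl. pose proof (Rle_0_sqr (a (phi1 k) Fin.F1)). unfold Rsqr in *. lra. }
    exists (fun k => phi1 (phi2 k)), (fun i => Fin.caseS' i (fun _ => R) l0 l'). split.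
    + apply incr_comp; auto.
    + apply coord_vcv. intros i.
      apply (Fin.caseS' i (fun i => Un_cv (fun k => a (phi1 (phi2 k)) i) (Fin.caseS' i (fun _ => R) l0 l'))).
      * apply (Un_cv_subseq (fun k => a (phi1 k) Fin.F1)); auto.
      * intros p. apply (vcv_coord _ _ _ Hc2 p).
Qed.

Lemma nonincreasing_extract (tau : nat -> R) :
  (forall k, 0 < tau k) -> Un_cv tau 0 ->
  exists phi, incr phi /\ forall k, tau (phi (S k)) <= tau (phi k).
Proof.
  intros Hp C. apply (extract_incr (fun _ p q => tau q <= tau p)).
  intros _ p. destruct (C (tau p) (Hp p)) as [M HM]. exists (S (max p M)). split; [lia|].
  specialize (HM (S (max p M)) ltac:(lia)). unfold Rdist in HM. rewrite Rminus_0_r in HM.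
  pose proof (Rle_abs (tau (S (max p M)))). lra.
Qed.

Lemma joint_extract n (tau : nat -> R) (w z : nat -> vec n) M1 M2 :
  (forall k, 0 < tau k) -> Un_cv tau 0 ->
  (forall k, vnorm (w k) <= M1) -> (forall k, vnorm (z k) <= M2) ->
  exists phi w0 z0, incr phi /\ pos_dec_to0 (fun k => tau (phi k)) /\
    vcv (fun k => w (phi k)) w0 /\ vcv (fun k => z (phi k)) z0.
Proof.
  intros Hp C Hw Hz.
  destruct (nonincreasing_extract tau Hp C) as [phi1 [Hi1 Hd1]].
  destruct (bolzano_weierstrass n (fun k => w (phi1 k)) M1) as [phi2 [w0 [Hi2 Hc2]]]; [auto|].
  destruct (bolzano_weierstrass n (fun k => z (phi1 (phi2 k))) M2) as [phi3 [z0 [Hi3 Hc3]]]; [auto|].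
  assert (Hi23 : incr (fun k => phi2 (phi3 k))) by (apply incr_comp; auto).
  assert (Hi : incr (fun k => phi1 (phi2 (phi3 k)))) by (apply (incr_comp phi1 _ Hi1 Hi23)).
  exists (fun k => phi1 (phi2 (phi3 k))), w0, z0. split; [exact Hi|split; [split; [|split]|split]].
  - auto.
  - intros k. assert (Hmono : forall j m, (j <= m)%nat -> tau (phi1 m) <= tau (phi1 j)).
    { intros j m Hjm. induction Hjm as [|m _ IHm]; [lra|]. specialize (Hd1 m). lra. }
    apply Hmono, (incr_mono _ Hi23). lia.
  - apply (Un_cv_subseq tau 0 _ Hi C).
  - apply (vcv_subseq _ (fun k => w (phi1 (phi2 k))) w0 phi3); auto.
  - exact Hc3.
Qed.

Lemma ege_mono a r r' : ege a r -> r' <= r -> ege a r'.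
Proof. destruct a; simpl; auto; lra. Qed.

Lemma egt_mono a r r' : egt a r -> r' <= r -> egt a r'.
Proof. destruct a; simpl; auto; lra. Qed.

(* Every proximal subgradient is a regular one: the quadratic error term
   [M |y - x|^2] is [o(|y - x|)]. *)
Lemma prox_to_reg n (f : vec n -> ereal) x v : prox_subdiff f x v -> reg_subdiff f x v.
Proof.
  intros [fx [E [M [delta [Hd H]]]]]. exists fx. split; auto. intros eps He.
  set (K := Rabs M + 1). assert (HK : 0 < K) by (unfold K; pose proof (Rabs_pos M); lra).
  exists (Rmin delta (eps / K)). split; [apply Rmin_pos; auto; apply Rdiv_lt_0_compat; auto|].
  intros y Hy. set (N := vnorm (vsub y x)) in *.
  destruct (Req_dec N 0) as [H0|H0].
  - pose proof (vnorm0_eq _ _ _ H0). subst y. rewrite E. simpl. fold N. rewrite H0.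
    replace (vsub x x) with (@vzero n) by (apply vec_eq; intros; unfold vsub, vzero; ring).
    rewrite dot_sym, dot_zerol. lra.
  - assert (0 <= N) by apply vnorm_pos.
    assert (HNd : N < delta) by (pose proof (Rmin_l delta (eps / K)); lra).
    assert (HNe : N * K < eps).
    { pose proof (Rmin_r delta (eps / K)). apply (Rmult_lt_compat_r K) in Hy; auto.
      apply Rlt_le_trans with (Rmin delta (eps / K) * K); [lra|].
      replace eps with (eps / K * K) at 2 by (field; lra). apply Rmult_le_compat_r; lra. }
    eapply ege_mono; [apply H; fold N; split; lra|]. fold N.
    assert (M * N <= Rabs M * N) by (apply Rmult_le_compat_r; [lra|apply Rle_abs]).
    unfold K in HNe. nra.
Qed.

(* ... and hence a limiting one (take constant sequences). *)
Lemma prox_to_lim n (f : vec n -> ereal) x v : prox_subdiff f x v -> lim_subdiff f x v.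
Proof.
  intros H. pose proof (prox_to_reg _ _ _ _ H) as Hr. destruct H as [fx [E _]].
  exists fx. split; auto. exists (fun _ => x), (fun _ => v).
  split; [apply vcv_const|split; [apply vcv_const|split; auto]].
  intros eps He. exists 0%nat. intros k _. exists fx. split; auto. rewrite Rminus_diag, Rabs_R0; auto.
Qed.

Lemma ecv_real_seq (a : nat -> ereal) d :
  ecv_real a d -> exists Q, Un_cv Q d /\ exists N, forall k, (N <= k)%nat -> a k = EFin (Q k).
Proof.
  intros C. exists (fun k => match a k with EFin r => r | EInf => d end). split.
  - intros eps He. destruct (C eps He) as [N HN]. exists N. intros k Hk.
    destruct (HN k Hk) as [r [Er Hr]]. rewrite Er. exact Hr.
  - destruct (C 1 ltac:(lra)) as [N HN]. exists N. intros k Hk.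
    destruct (HN k Hk) as [r [Er _]]. rewrite Er. reflexivity.
Qed.

Lemma q2_value n (f : vec n -> ereal) xbar fx tau y :
  q2 f xbar vzero fx tau y =
  match f (vadd xbar (vscal tau y)) with
  | EFin g => EFin ((g - fx) / (tau ^ 2 / 2)) | EInf => EInf end.
Proof. unfold q2. rewrite dot_zerol. destruct (f _); auto. do 2 f_equal. ring. Qed.

Lemma q2_ge n (f : vec n -> ereal) xbar fx tau y b :
  0 < tau -> ege (f (vadd xbar (vscal tau y))) (fx + b * (tau ^ 2 / 2)) ->
  ege (q2 f xbar vzero fx tau y) b.
Proof.
  intros Ht H. rewrite q2_value. destruct (f _) as [g|]; cbn [ege] in *; auto.
  assert (HT : 0 < tau ^ 2 / 2) by nra.
  apply (Rmult_le_reg_r (tau ^ 2 / 2)); auto.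
  replace ((g - fx) / (tau ^ 2 / 2) * (tau ^ 2 / 2)) with (g - fx) by (field; apply Rgt_not_eq; exact Ht). lra.
Qed.

Lemma q2_at_origin n (f : vec n -> ereal) xbar fx tau :
  f xbar = EFin fx -> q2 f xbar vzero fx tau vzero = EFin 0.
Proof.
  intros E. rewrite q2_value.
  replace (vadd xbar (vscal tau vzero)) with xbar by (apply vec_eq; intros; unfold vadd, vscal, vzero; ring).
  rewrite E, Rminus_diag. unfold Rdiv. rewrite Rmult_0_l. reflexivity.
Qed.

Lemma q2_rescale n (f : vec n -> ereal) xbar fx s t y Q :
  0 < s -> 0 < t -> q2 f xbar vzero fx (s * t) y = EFin Q ->
  q2 f xbar vzero fx t (vscal s y) = EFin (s * s * Q).
Proof.
  intros Hs Ht. rewrite !q2_value.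
  replace (vadd xbar (vscal t (vscal s y))) with (vadd xbar (vscal (s * t) y))
    by (apply vec_eq; intros; unfold vadd, vscal; ring).
  destruct (f _) as [g|]; [|discriminate]. intros HQ. injection HQ as <-.
  f_equal. field. split; lra.
Qed.

(* The liminf [d^2 f(xbar|v)(w)] always exists in [-oo, +oo]: it is the
   supremum of the levels that the quotients eventually exceed. *)
Lemma d2_exists n (f : vec n -> ereal) xbar v fx w : exists a, is_d2 f xbar v fx w a.
Proof.
  set (q := q2 f xbar v fx).
  set (S := fun b => exists delta, 0 < delta /\ forall tau w', 0 < tau < delta ->
              vnorm (vsub w' w) < delta -> egt (q tau w') b).
  assert (down : forall b b', S b -> b' <= b -> S b').
  { intros b b' [d [Hd H]] hb. exists d. split; auto. intros. eapply egt_mono; eauto. }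
  assert (notS : forall b' b, ~ S b' -> b' < b -> forall delta, 0 < delta ->
            exists tau w', 0 < tau < delta /\ vnorm (vsub w' w) < delta /\ elt (q tau w') b).
  { intros b' b nS hb delta Hd. apply NNPP. intros C. apply nS. exists delta. split; auto.
    intros tau w' H1 H2. destruct (q tau w') as [r|] eqn:Eq; simpl; auto.
    destruct (Rlt_dec b' r) as [h|h]; auto. exfalso. apply C. exists tau, w'.
    rewrite Eq. simpl. repeat split; auto; lra. }
  assert (above : forall b, ~ S b -> forall s, S s -> s <= b).
  { intros b nb s Hs. destruct (Rle_dec s b); auto. exfalso. apply nb. apply (down s); auto. lra. }
  destruct (classic (exists b, S b)) as [[b0 Hb0]|Hne].
  - destruct (classic (bound S)) as [Hb|Hnb].
    + destruct (completeness S Hb (ex_intro _ b0 Hb0)) as [m [Hub Hlub]].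
      exists (XFin m). split; simpl.
      * intros b hb. apply NNPP. intros nb. specialize (Hlub b (above b nb)). lra.
      * intros b hb. apply (notS ((m + b) / 2)); [|lra]. intros Hs. specialize (Hub _ Hs). lra.
    + exists XPInf. split; simpl; [|intros b []].
      intros b _. apply NNPP. intros nb. apply Hnb. exists b. exact (above b nb).
  - exists XMInf. split; simpl; [intros b []|].
    intros b _. apply (notS (b - 1)); [|lra]. intros Hs. apply Hne. eauto.
Qed.

Lemma d2_below_sequence n (f : vec n -> ereal) xbar v fx w a t wk b :
  is_d2 f xbar v fx w a -> xgt a b -> (forall k, 0 < t k) -> Un_cv t 0 -> vcv wk w ->
  exists N, forall k, (N <= k)%nat -> egt (q2 f xbar v fx (t k) (wk k)) b.
Proof.
  intros [Hd2 _] hb Hp Ht Hw. destruct (Hd2 b hb) as [dl [Hdl Hnear]].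
  destruct (eventually_and (fun k => t k < dl) (fun k => vnorm (vsub (wk k) w) < dl)) as [N HN].
  - destruct (Ht dl Hdl) as [N HN]. exists N. intros k Hk. specialize (HN k Hk).
    unfold Rdist in HN. rewrite Rminus_0_r, Rabs_pos_eq in HN; auto. apply Rlt_le, Hp.
  - apply Hw; auto.
  - exists N. intros k Hk. destruct (HN k Hk). apply Hnear; auto.
Qed.

Definition xge (a : xreal) (r : R) : Prop :=
  match a with XFin x => r <= x | XPInf => True | XMInf => False end.

(* The argument uses a
   recovery sequence, which twice epi-differentiability provides. *)
Lemma d2_quadratic_minorant n (f : vec n -> ereal) xbar fx rho d0 w a :
  f xbar = EFin fx -> 0 < d0 ->
  (forall x, vnorm (vsub x xbar) < d0 -> ege (f x) (fx + rho / 2 * (vnorm (vsub x xbar))^2)) ->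
  twice_epi_diff f xbar vzero -> is_d2 f xbar vzero fx w a -> xge a (rho * dot w w).
Proof.
  intros E Hd0 Hmin [fx' [E' TED]] D2. rewrite E in E'; injection E' as <-.
  set (tau := fun k => / (INR k + 1)).
  assert (Htp : forall k, 0 < tau k) by (intros k; apply Rinv_0_lt_compat; pose proof (pos_INR k); lra).
  assert (Htau : pos_dec_to0 tau).
  { split; [exact Htp|split; [|exact Un_cv_inv]]. intros k. apply Rinv_le_contravar.
    - pose proof (pos_INR k); lra.
    - rewrite S_INR. lra. }
  destruct (TED w a D2 tau Htau) as [w' [Hw' Hrec]].
  assert (Hq : exists N, forall k, (N <= k)%nat ->
             ege (q2 f xbar vzero fx (tau k) (w' k)) (rho * dot (w' k) (w' k))).
  { destruct (vcv_ray n xbar tau w' w Un_cv_inv Hw' d0 Hd0) as [N HN]. exists N. intros k Hk.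
    apply q2_ge; auto. eapply ege_mono; [apply Hmin, HN, Hk|].
    replace (vsub (vadd xbar (vscal (tau k) (w' k))) xbar) with (vscal (tau k) (w' k))
      by (apply vec_eq; intros; unfold vsub, vadd, vscal; ring).
    rewrite vnorm_sq, dot_scall, dot_scalr. right. field. }
  assert (Hw2 : Un_cv (fun k => rho * dot (w' k) (w' k)) (rho * dot w w))
    by (apply CV_mult; [apply Un_cv_const|apply dot_cv; auto]).
  destruct a as [d| |]; simpl in *; auto.
  - destruct (ecv_real_seq _ _ Hrec) as [Q [HQ HEQ]].
    apply (Rle_cv_lim_eventually _ _ _ _ Hw2 HQ).
    destruct (eventually_and _ _ Hq HEQ) as [N HN]. exists N. intros k Hk.
    destruct (HN k Hk) as [Hge Ek]. rewrite Ek in Hge. exact Hge.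
  - destruct (Un_cv_eventually_gt _ _ (rho * dot w w - 1) Hw2 ltac:(lra)) as [N1 HN1].
    destruct (eventually_and _ _ Hq (Hrec (rho * dot w w - 1))) as [N2 HN2].
    destruct (HN2 (max N1 N2) ltac:(lia)) as [Hge Hlt]. specialize (HN1 (max N1 N2) ltac:(lia)).
    destruct (q2 _ _ _ _ _ _); simpl in *; lra.
Qed.

(** * Consequences of prox-regularity *)

Definition prox_reg_ineq n (f : vec n -> ereal) xbar fx r eps : Prop :=
  forall x u v fu,
    vnorm (vsub x xbar) <= eps -> vnorm (vsub u xbar) <= eps ->
    f u = EFin fu -> Rabs (fu - fx) < eps ->
    lim_subdiff f u v -> vnorm (vsub v vzero) <= eps ->
    ege (f x) (fu + dot v (vsub x u) - r / 2 * (vnorm (vsub x u))^2).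

(* Taking [u = xbar], [v = 0]: [f] has a local quadratic minorant at [xbar]. *)
Lemma prox_reg_minorant n (f : vec n -> ereal) xbar fx r eps :
  f xbar = EFin fx -> prox_reg_ineq n f xbar fx r eps -> lim_subdiff f xbar vzero -> 0 < eps ->
  forall x, vnorm (vsub x xbar) <= eps -> ege (f x) (fx - r / 2 * (vnorm (vsub x xbar))^2).
Proof.
  intros E PR L He x Hx.
  assert (Hz : forall y : vec n, vsub y y = vzero) by (intros; apply vec_eq; intros; unfold vsub, vzero; ring).
  eapply ege_mono; [apply (PR x xbar vzero fx); auto|].
  - rewrite Hz, vnorm_zero. lra.
  - rewrite Rminus_diag, Rabs_R0. exact He.
  - rewrite Hz, vnorm_zero. lra.
  - rewrite dot_zerol. lra.
Qed.

Definition qmodel n (r : R) (z d : vec n) : R := dot z d - r / 2 * dot d d.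

Lemma qmodel_cv n r (zk dk : nat -> vec n) z d :
  vcv zk z -> vcv dk d -> Un_cv (fun k => qmodel n r (zk k) (dk k)) (qmodel n r z d).
Proof.
  intros Hz Hd. apply CV_minus; [apply dot_cv; auto|apply CV_mult; [apply Un_cv_const|apply dot_cv; auto]].
Qed.

(* Along a sequence realizing [z in D(d_p f)(xbar|0)(w)], the base points are
   eventually in the zone where prox-regularity applies (this is where
   subdifferential continuity enters); rescaled, the prox-regularity
   inequality becomes a lower bound for all difference quotients at step [t k]
   in terms of the quotient at [w k]. *)
Lemma graph_quotient_bound n (f : vec n -> ereal) xbar fx r eps (t : nat -> R) (wk zk : nat -> vec n) w z :
  f xbar = EFin fx -> 0 < eps -> prox_reg_ineq n f xbar fx r eps ->
  subdiff_continuous f xbar vzero ->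
  (forall k, 0 < t k) -> Un_cv t 0 -> vcv wk w -> vcv zk z ->
  (forall k, prox_subdiff f (vadd xbar (vscal (t k) (wk k))) (vadd vzero (vscal (t k) (zk k)))) ->
  exists N, forall k, (N <= k)%nat -> exists P,
    q2 f xbar vzero fx (t k) (wk k) = EFin P /\
    forall y, vnorm (vscal (t k) y) <= eps ->
      ege (q2 f xbar vzero fx (t k) y) (P + 2 * qmodel n r (zk k) (vsub y (wk k))).
Proof.
  intros E He PR [fx' [E' SC]] Htp Htc Hw Hz Hp. rewrite E in E'. injection E' as <-.
  set (u := fun k => vadd xbar (vscal (t k) (wk k))).
  set (v := fun k => vadd vzero (vscal (t k) (zk k))).
  assert (Hu : vcv u xbar) by (apply vcv_ray with w; auto).
  assert (Hv : vcv v vzero) by (apply vcv_ray with z; auto).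
  specialize (SC u v Hu Hv (fun k => prox_to_lim _ _ _ _ (Hp k))).
  destruct (eventually_and _ _ (SC eps He) (eventually_and _ _ (Hu eps He) (Hv eps He))) as [N HN].
  exists N. intros k Hk. destruct (HN k Hk) as [[Fk [EF HF]] [Huk Hvk]].
  assert (HT : 0 < t k ^ 2 / 2) by (specialize (Htp k); nra).
  exists ((Fk - fx) / (t k ^ 2 / 2)). split.
  - rewrite q2_value. fold (u k). rewrite EF. reflexivity.
  - intros y Hy. apply q2_ge; auto.
    assert (Hd : vsub (vadd xbar (vscal (t k) y)) (u k) = vscal (t k) (vsub y (wk k)))
      by (apply vec_eq; intros; unfold u, vsub, vadd, vscal; ring).
    assert (Hvk' : v k = vscal (t k) (zk k)) by (apply vec_eq; intros; unfold v, vadd, vzero, vscal; ring).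
    eapply ege_mono; [apply (PR _ (u k) (v k) Fk); auto; try lra|].
    + replace (vsub (vadd xbar (vscal (t k) y)) xbar) with (vscal (t k) y)
        by (apply vec_eq; intros; unfold vsub, vadd, vscal; ring). exact Hy.
    + apply prox_to_lim, Hp.
    + rewrite Hd, Hvk', vnorm_sq, !dot_scall, !dot_scalr. unfold qmodel.
      right. field. specialize (Htp k). lra.
Qed.
(** * Proximal points: producing proximal subgradients *)

Lemma real_inf (S : R -> Prop) lb :
  (exists m, S m) -> (forall m, S m -> lb <= m) ->
  exists inf, (forall m, S m -> inf <= m) /\ forall e, 0 < e -> exists m, S m /\ m < inf + e.
Proof.
  intros [m0 Hm0] Hlb.
  destruct (completeness (fun m => S (- m))) as [M [Hub Hlub]].
  - exists (- lb). intros m Hm. specialize (Hlb _ Hm). lra.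
  - exists (- m0). rewrite Ropp_involutive. exact Hm0.
  - exists (- M). split.
    + intros m Hm. assert (S (- - m)) by (rewrite Ropp_involutive; exact Hm). specialize (Hub _ H). lra.
    + intros e He. apply NNPP. intros C. assert (Hb : is_upper_bound (fun m => S (- m)) (M - e)).
      { intros m Hm. destruct (Rle_dec m (M - e)) as [h|h]; auto. exfalso. apply C.
        exists (- m). split; auto. lra. }
      specialize (Hlub _ Hb). lra.
Qed.

Lemma lsc_seq n (g : vec n -> ereal) (y : nat -> vec n) u (gy : nat -> R) l :
  lsc g -> vcv y u -> (forall k, g (y k) = EFin (gy k)) -> Un_cv gy l ->
  exists gu, g u = EFin gu /\ gu <= l.
Proof.
  intros Hlsc Hy Eg Hl. apply NNPP. intros C.
  assert (Ha : exists a, l < a /\ egt (g u) a).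
  { destruct (g u) as [gu|] eqn:Egu.
    - exists ((gu + l) / 2). destruct (Rle_dec gu l) as [h|h]; [exfalso; apply C; eauto|].
      simpl. split; lra.
    - exists (l + 1). simpl. split; auto. lra. }
  destruct Ha as [a [Ha1 Ha2]]. destruct (Hlsc u a Ha2) as [dl [Hdl Hnear]].
  destruct (eventually_and _ _ (Hy dl Hdl) (Un_cv_eventually_lt _ _ a Hl Ha1)) as [N HN].
  destruct (HN N (Nat.le_refl N)) as [Hk1 Hk2]. specialize (Hnear _ Hk1).
  rewrite Eg in Hnear. simpl in Hnear. lra.
Qed.

Lemma lsc_min_on_ball n (g : vec n -> ereal) (psi : vec n -> R) (c : vec n) rad lb :
  lsc g ->
  (forall (yk : nat -> vec n) y, vcv yk y -> Un_cv (fun k => psi (yk k)) (psi y)) ->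
  (forall y gy, vnorm (vsub y c) <= rad -> g y = EFin gy -> lb <= gy + psi y) ->
  (exists y0 gy0, vnorm (vsub y0 c) <= rad /\ g y0 = EFin gy0) ->
  exists u gu, vnorm (vsub u c) <= rad /\ g u = EFin gu /\
    forall y gy, vnorm (vsub y c) <= rad -> g y = EFin gy -> gu + psi u <= gy + psi y.
Proof.
  intros Hlsc Hpsi Hlb [y0 [gy0 [Hy0 Eg0]]].
  set (S := fun m => exists y gy, vnorm (vsub y c) <= rad /\ g y = EFin gy /\ m = gy + psi y).
  destruct (real_inf S lb) as [inf [Hinf Happrox]].
  { exists (gy0 + psi y0), y0, gy0. auto. }
  { intros m [y [gy [Hy [Eg ->]]]]. eauto. }
  (* a minimizing sequence, and a convergent subsequence of it *)
  destruct (seq_choice (vec n * R) (fun k p => vnorm (vsub (fst p) c) <= rad /\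
              g (fst p) = EFin (snd p) /\ snd p + psi (fst p) < inf + / (INR k + 1))) as [yg Hyg].
  { intros k. destruct (Happrox (/ (INR k + 1))) as [m [[y [gy [Hy [Eg ->]]]] Hm]].
    - apply Rinv_0_lt_compat. pose proof (pos_INR k). lra.
    - exists (y, gy). simpl. auto. }
  destruct (bolzano_weierstrass n (fun k => fst (yg k)) (vnorm (vsub vzero c) + rad)) as [phi [u [Hphi Hcv]]].
  { intros k. destruct (Hyg k) as [Hy _].
    pose proof (vnorm_triangle _ (fst (yg k)) c vzero).
    replace (vsub (fst (yg k)) vzero) with (fst (yg k)) in H
      by (apply vec_eq; intros; unfold vsub, vzero; ring).
    rewrite (vnorm_sym _ c vzero) in H. lra. }
  assert (Hu : vnorm (vsub u c) <= rad).
  { apply (Un_cv_le (fun k => vnorm (vsub (fst (yg (phi k))) c))).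
    - apply vnorm_cv, vcv_sub; auto using vcv_const.
    - exists 0%nat. intros k _. apply Hyg. }
  assert (Hval : Un_cv (fun k => snd (yg (phi k))) (inf - psi u)).
  { apply (Un_cv_ext (fun k => (snd (yg (phi k)) + psi (fst (yg (phi k)))) - psi (fst (yg (phi k)))));
      [intros; ring|].
    apply CV_minus; [|apply Hpsi; auto].
    apply (Un_cv_squeeze _ (fun k => / (INR k + 1))); [|apply Un_cv_inv].
    intros k. destruct (Hyg (phi k)) as [Hy [Eg Hlt]].
    assert (inf <= snd (yg (phi k)) + psi (fst (yg (phi k)))) by (apply Hinf; exists (fst (yg (phi k))); eauto).
    assert (/ (INR (phi k) + 1) <= / (INR k + 1)).
    { apply Rinv_le_contravar; [pose proof (pos_INR k); lra|].
      apply Rplus_le_compat_r, le_INR, incr_ge, Hphi. }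
    rewrite Rabs_pos_eq; lra. }
  destruct (lsc_seq n g (fun k => fst (yg (phi k))) u (fun k => snd (yg (phi k))) (inf - psi u)
              Hlsc Hcv (fun k => proj1 (proj2 (Hyg (phi k)))) Hval) as [gu [Egu Hgu]].
  exists u, gu. split; auto. split; auto.
  intros y gy Hy Eg. assert (inf <= gy + psi y) by (apply Hinf; exists y, gy; auto). lra.
Qed.

Lemma ball_minimizer_prox_subgradient n (g : vec n -> ereal) (c x0 u : vec n) rad L gu :
  vnorm (vsub u c) < rad -> g u = EFin gu ->
  (forall y gy, vnorm (vsub y c) <= rad -> g y = EFin gy ->
     gu + L / 2 * dot (vsub u x0) (vsub u x0) <= gy + L / 2 * dot (vsub y x0) (vsub y x0)) ->
  prox_subdiff g u (vscal L (vsub x0 u)).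
Proof.
  intros Hu Eg Hmin. exists gu. split; auto. exists (L / 2), (rad - vnorm (vsub u c)). split; [lra|].
  intros y [_ Hy]. destruct (g y) as [gy|] eqn:Egy; cbn [ege]; auto.
  assert (Hyc : vnorm (vsub y c) <= rad) by (pose proof (vnorm_triangle _ y u c); lra).
  specialize (Hmin y gy Hyc Egy).
  replace (vsub y x0) with (vadd (vsub y u) (vsub u x0)) in Hmin
    by (apply vec_eq; intros; unfold vsub, vadd; ring).
  replace (vsub x0 u) with (vscal (-1) (vsub u x0)) by (apply vec_eq; intros; unfold vsub, vscal; ring).
  rewrite !dot_addl, !dot_addr, (dot_sym _ (vsub u x0) (vsub y u)) in Hmin.
  rewrite dot_scall, dot_scall, vnorm_sq, dot_sym. lra.
Qed.

Lemma proximal_step_estimate c r e rho du :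
  0 < c <= 1 -> 0 <= r -> 0 < rho -> 0 <= du -> du <= e + rho ->
  (10 * r + 8) / 2 * (e * e) < c * rho ^ 2 + r / 2 * du ^ 2 -> e < rho / 2.
Proof.
  intros Hc Hr Hrho Hdu Htri Hlt. destruct (Rlt_le_dec e (rho / 2)) as [h|h]; auto. exfalso.
  assert (rho ^ 2 <= 4 * (e * e)) by nra.
  assert (du ^ 2 <= 9 * (e * e)) by nra.
  assert (c * rho ^ 2 <= 4 * (e * e)) by nra.
  assert (r / 2 * du ^ 2 <= r / 2 * (9 * (e * e))) by (apply Rmult_le_compat_l; lra).
  nra.
Qed.

Lemma bad_points_of_not_strong_min n (f : vec n -> ereal) xbar fx c dl :
  f xbar = EFin fx -> ~ strong_local_min f xbar -> 0 < c -> 0 < dl ->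
  exists x y, 0 < vnorm (vsub x xbar) < dl /\ f x = EFin y /\ y < fx + c * (vnorm (vsub x xbar))^2.
Proof.
  intros E Hns Hc Hdl. apply NNPP. intros C. apply Hns.
  exists fx. split; auto. exists (2 * c), dl. split; [lra|split; auto].
  intros x Hx. destruct (f x) as [y|] eqn:Ey; simpl; auto.
  destruct (Rlt_le_dec y (fx + c * (vnorm (vsub x xbar))^2)) as [h|h]; [exfalso|lra].
  apply C. exists x, y. repeat split; auto.
  pose proof (vnorm_pos _ (vsub x xbar)).
  destruct (Req_dec (vnorm (vsub x xbar)) 0) as [h0|h0]; [|lra].
  pose proof (vnorm0_eq _ _ _ h0) as Ex. subst x. rewrite E in Ey. injection Ey as <-.
  rewrite h0 in h. lra.
Qed.

(* Rescaling: points [u j -> xbar] carrying proximal subgradients of size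
   [O(|u j - xbar|)] produce, along a subsequence, a pair [(w0, z0)] in the
   graphical derivative [D(d_p f)(xbar|0)] with [|w0| = 1]; if moreover
   [f (u j) <= f xbar + C |u j - xbar|^2], the difference quotients along that
   subsequence stay below [2 C]. *)
Lemma graph_pair_of_sequence n (f : vec n -> ereal) xbar fx (u v : nat -> vec n) L C :
  (forall j, 0 < vnorm (vsub (u j) xbar)) -> Un_cv (fun j => vnorm (vsub (u j) xbar)) 0 ->
  (forall j, prox_subdiff f (u j) (v j)) ->
  (forall j, vnorm (v j) <= L * vnorm (vsub (u j) xbar)) ->
  (forall j, exists F, f (u j) = EFin F /\ F - fx <= C * (vnorm (vsub (u j) xbar))^2) ->
  exists t wk w0 z0, (forall k, 0 < t k) /\ Un_cv t 0 /\ vcv wk w0 /\ vnorm w0 = 1 /\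
    graph_deriv_prox f xbar vzero w0 z0 /\
    forall k, exists P, q2 f xbar vzero fx (t k) (wk k) = EFin P /\ P <= 2 * C.
Proof.
  intros Hpos Hcv Hsub Hsmall Hval.
  set (tau := fun j => vnorm (vsub (u j) xbar)).
  set (w' := fun j => vscal (/ tau j) (vsub (u j) xbar)).
  set (z' := fun j => vscal (/ tau j) (v j)).
  assert (Hinv : forall j, Rabs (/ tau j) = / tau j)
    by (intros j; apply Rabs_pos_eq; left; apply Rinv_0_lt_compat, Hpos).
  assert (Hw'n : forall j, vnorm (w' j) = 1).
  { intros j. unfold w'. rewrite vnorm_scal, Hinv. fold (tau j). field. apply Rgt_not_eq, Hpos. }
  assert (Hz'n : forall j, vnorm (z' j) <= L).
  { intros j. unfold z'. rewrite vnorm_scal, Hinv. specialize (Hpos j). specialize (Hsmall j).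
    fold (tau j) in Hpos, Hsmall. apply (Rmult_le_reg_l (tau j)); auto.
    rewrite <- Rmult_assoc, Rinv_r by lra. lra. }
  assert (Hray : forall j, vadd xbar (vscal (tau j) (w' j)) = u j).
  { intros j. apply vec_eq. intros i. unfold vadd, w', vscal, vsub. field. apply Rgt_not_eq, Hpos. }
  assert (Hsg : forall j, vadd vzero (vscal (tau j) (z' j)) = v j).
  { intros j. apply vec_eq. intros i. unfold vadd, z', vscal, vzero. field. apply Rgt_not_eq, Hpos. }
  destruct (joint_extract n tau w' z' 1 L Hpos Hcv ltac:(intros; rewrite Hw'n; lra) Hz'n)
    as [phi [w0 [z0 [Hphi [Hdec [Hcw Hcz]]]]]].
  exists (fun k => tau (phi k)), (fun k => w' (phi k)), w0, z0.
  destruct Hdec as [Htp [Htd Htc]].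
  split; [exact Htp|split; [exact Htc|split; [exact Hcw|split; [|split]]]].
  - apply Rle_antisym; [apply (Un_cv_le _ _ _ (vnorm_cv _ _ _ Hcw))|apply (Un_cv_ge _ _ _ (vnorm_cv _ _ _ Hcw))];
      exists 0%nat; intros k _; rewrite Hw'n; lra.
  - exists (fun k => tau (phi k)), (fun k => w' (phi k)), (fun k => z' (phi k)).
    split; [split; auto|split; [exact Hcw|split; [exact Hcz|]]].
    intros k. rewrite Hray, Hsg. apply Hsub.
  - intros k. destruct (Hval (phi k)) as [F [EF HF]]. fold (tau (phi k)) in HF.
    specialize (Htp k). simpl in Htp.
    exists ((F - fx) / (tau (phi k) ^ 2 / 2)). rewrite q2_value, Hray, EF. split; auto.
    assert (HT : 0 < tau (phi k) ^ 2 / 2) by nra.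
    apply (Rmult_le_reg_r (tau (phi k) ^ 2 / 2)); auto.
    replace ((F - fx) / (tau (phi k) ^ 2 / 2) * (tau (phi k) ^ 2 / 2)) with (F - fx) by (field; lra).
    lra.
Qed.

Definition second_order_condition n (f : vec n -> ereal) xbar kappa : Prop :=
  forall w, dom_graph_deriv_prox f xbar vzero w -> vnorm w = 1 ->
    exists z, graph_deriv_prox f xbar vzero w z /\ kappa <= dot z w.

(* If [s |-> s^2 d - 2 ((s-1) p - r/2 (s-1)^2 W) - d] is nonnegative for all
   [s > 0], it has a minimum at [s = 1], where its derivative [2 (d - p)]
   must vanish. *)
Lemma stationary_at_one d p r W :
  (forall s, 0 < s -> d <= s * s * d - 2 * ((s - 1) * p - r / 2 * ((s - 1) * (s - 1)) * W)) ->
  p = d.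
Proof.
  intros H. set (K := d + r * W).
  assert (Hb : forall e, 0 < e < 1 -> 2 * Rabs (d - p) <= e * Rabs K).
  { intros e He.
    assert (Hup : 0 <= 2 * (d - p) + e * K).
    { apply (Rmult_le_reg_l e); [lra|]. specialize (H (1 + e) ltac:(lra)). unfold K. nra. }
    assert (Hdown : 0 <= 2 * (p - d) + e * K).
    { apply (Rmult_le_reg_l e); [lra|]. specialize (H (1 - e) ltac:(lra)). unfold K. nra. }
    pose proof (Rle_abs K). unfold Rabs at 1. destruct (Rcase_abs (d - p)); nra. }
  apply NNPP. intros Hne.
  assert (Hpos : 0 < Rabs (d - p)) by (apply Rabs_pos_lt; lra).
  set (e := Rmin (1 / 2) (Rabs (d - p) / (Rabs K + 1))).
  assert (He : 0 < e) by (apply Rmin_pos; [lra|apply Rdiv_lt_0_compat; pose proof (Rabs_pos K); lra]).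
  assert (HeK : e * (Rabs K + 1) <= Rabs (d - p)).
  { pose proof (Rabs_pos K).
    apply Rle_trans with (Rabs (d - p) / (Rabs K + 1) * (Rabs K + 1));
      [apply Rmult_le_compat_r; [lra|apply Rmin_r]|right; field; lra]. }
  assert (He1 : e <= 1 / 2) by apply Rmin_l.
  specialize (Hb e ltac:(lra)).
  nra.
Qed.

Section ProxRegularSetting.
Variables (n : nat) (f : vec n -> ereal) (xbar : vec n) (fx r eps : R).
Hypothesis Efx : f xbar = EFin fx.
Hypothesis Heps : 0 < eps.
Hypothesis PR : prox_reg_ineq n f xbar fx r eps.
Hypothesis L0 : lim_subdiff f xbar vzero.
Hypothesis SC : subdiff_continuous f xbar vzero.
Hypothesis TED : twice_epi_diff f xbar vzero.
Hypothesis Hr : 0 <= r.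
Hypothesis Hlsc : lsc f.

(* Testing the bound of [graph_quotient_bound] with [y = 0] bounds the
   quotients along the graphical-derivative sequence, so the liminf is finite. *)
Lemma d2_graph_not_pinfty w z :
  is_d2 f xbar vzero fx w XPInf -> graph_deriv_prox f xbar vzero w z -> False.
Proof.
  intros D2 [t [wk [zk [[Htp [_ Htc]] [Hw [Hz Hp]]]]]].
  destruct (graph_quotient_bound n f xbar fx r eps t wk zk w z Efx Heps PR SC Htp Htc Hw Hz Hp)
    as [N0 HN0].
  set (C := fun k => qmodel n r (zk k) (vsub vzero (wk k))).
  assert (HC : Un_cv C (qmodel n r z (vsub vzero w)))
    by (apply qmodel_cv; auto; apply vcv_sub; auto using vcv_const).
  set (b := -2 * qmodel n r z (vsub vzero w) + 1).
  destruct (d2_below_sequence n f xbar vzero fx w XPInf t wk b D2 I Htp Htc Hw) as [N1 HN1].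
  destruct (Un_cv_eventually_gt _ _ (qmodel n r z (vsub vzero w) - 1 / 2) HC ltac:(lra)) as [N2 HN2].
  set (k := max N0 (max N1 N2)).
  destruct (HN0 k ltac:(lia)) as [P [EP Hbound]]. specialize (HN1 k ltac:(lia)). specialize (HN2 k ltac:(lia)).
  rewrite EP in HN1. cbn [egt] in HN1.
  specialize (Hbound vzero). rewrite (q2_at_origin n f xbar fx (t k) Efx) in Hbound.
  rewrite vnorm_scal, vnorm_zero, Rmult_0_r in Hbound. specialize (Hbound (Rlt_le _ _ Heps)).
  cbn [ege] in Hbound. fold (C k) in Hbound. unfold b in HN1. lra.
Qed.

(* Comparing the quotient at [w k] with the quotients along a recovery
   sequence for the steps [s * t k] (tested at [y = s w'_k] in the bound of
   [graph_quotient_bound]) gives [d <= s^2 d - 2 q(z, (s-1) w)] for all [s > 0]. *)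
Lemma d2_graph_rescaled w z d s :
  is_d2 f xbar vzero fx w (XFin d) -> graph_deriv_prox f xbar vzero w z -> 0 < s ->
  d <= s * s * d - 2 * qmodel n r z (vscal (s - 1) w).
Proof.
  intros D2 [t [wk [zk [[Htp [Htd Htc]] [Hw [Hz Hp]]]]]] hs.
  destruct (graph_quotient_bound n f xbar fx r eps t wk zk w z Efx Heps PR SC Htp Htc Hw Hz Hp)
    as [N0 HN0].
  destruct TED as [fx' [E' Hrecov]]. rewrite Efx in E'. injection E' as <-.
  assert (Hst : pos_dec_to0 (fun k => s * t k)).
  { split; [|split]; [intros k; specialize (Htp k); nra|intros k; specialize (Htd k); nra|].
    replace 0 with (s * 0) by ring. apply CV_mult; auto using Un_cv_const. }
  destruct (Hrecov w (XFin d) D2 _ Hst) as [w' [Hw' Hrec]].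
  destruct (ecv_real_seq _ _ Hrec) as [Q [HQ HEQ]].
  set (C := fun k => qmodel n r (zk k) (vsub (vscal s (w' k)) (wk k))).
  set (C0 := qmodel n r z (vscal (s - 1) w)).
  assert (HC : Un_cv C C0).
  { unfold C0. replace (vscal (s - 1) w) with (vsub (vscal s w) w)
      by (apply vec_eq; intros; unfold vsub, vscal; ring).
    apply qmodel_cv; auto. apply vcv_sub; auto. apply vcv_scal; auto. }
  assert (Hsmall : exists N, forall k, (N <= k)%nat -> vnorm (vscal (t k) (vscal s (w' k))) <= eps).
  { assert (Hn : Un_cv (fun k => t k * vnorm (vscal s (w' k))) 0).
    { replace 0 with (0 * vnorm (vscal s w)) by ring.
      apply CV_mult; auto. apply vnorm_cv, vcv_scal; auto. }
    destruct (Un_cv_eventually_lt _ _ eps Hn Heps) as [N HN]. exists N. intros k Hk.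
    rewrite vnorm_scal, Rabs_pos_eq by (left; apply Htp). left. apply HN, Hk. }
  destruct (Rle_lt_dec d (s * s * d - 2 * C0)) as [Hle|Hlt]; [exact Hle|exfalso].
  set (b := (d + (s * s * d - 2 * C0)) / 2).
  assert (Hlim : b <= s * s * d - 2 * C0).
  { apply (Un_cv_ge (fun k => s * s * Q k - 2 * C k)).
    { apply CV_minus; apply CV_mult; auto using Un_cv_const. }
    destruct (d2_below_sequence n f xbar vzero fx w (XFin d) t wk b D2 ltac:(simpl; unfold b; lra)
                Htp Htc Hw) as [N1 HN1].
    destruct (eventually_and _ _ HEQ (eventually_and _ _ Hsmall
                (eventually_and _ _ (ex_intro _ N0 HN0) (ex_intro _ N1 HN1)))) as [N HN].
    exists N. intros k Hk. destruct (HN k Hk) as [EQ [Hy [[P [EP Hbound]] Hb]]].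
    specialize (Hbound _ Hy). rewrite EP in Hb. cbn [egt] in Hb.
    rewrite (q2_rescale n f xbar fx s (t k) (w' k) (Q k) hs (Htp k) EQ) in Hbound.
    cbn [ege] in Hbound. fold (C k) in Hbound. lra. }
  unfold b in Hlim. lra.
Qed.

(* Finite case: the function of [s] above is minimal at [s = 1], which forces
   [d = <z, w>]. *)
Lemma d2_graph_finite w z d :
  is_d2 f xbar vzero fx w (XFin d) -> graph_deriv_prox f xbar vzero w z -> d = dot z w.
Proof.
  intros D2 G. symmetry. apply (stationary_at_one d (dot z w) r (dot w w)). intros s hs.
  pose proof (d2_graph_rescaled w z d s D2 G hs) as H.
  unfold qmodel in H. rewrite !dot_scall, !dot_scalr in H. lra.
Qed.

Lemma d2_eq_dot_of_graph w z a :
  is_d2 f xbar vzero fx w a -> graph_deriv_prox f xbar vzero w z -> a = XFin (dot z w).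
Proof.
  intros D2 G. destruct a as [d| |].
  - f_equal. exact (d2_graph_finite w z d D2 G).
  - exfalso. exact (d2_graph_not_pinfty w z D2 G).
  - exfalso. apply (d2_quadratic_minorant n f xbar fx (- r) eps w XMInf Efx Heps); auto.
    intros x Hx. eapply ege_mono; [apply (prox_reg_minorant n f xbar fx r eps); auto; lra|]. lra.
Qed.

(* The proximal-point step at a point [x0] where [f] is below
   [f xbar + c |x0 - xbar|^2]: minimizing [f + L/2 |. - x0|^2] over the
   prox-regularity ball gives a nearby [u] (within [|x0 - xbar| / 2]) with the
   same growth bound and the proximal subgradient [L (x0 - u)]. *)
Lemma proximal_point_near_bad_point c x0 y0 :
  0 < c <= 1 -> 0 < vnorm (vsub x0 xbar) < eps / 2 ->
  f x0 = EFin y0 -> y0 < fx + c * (vnorm (vsub x0 xbar))^2 ->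
  exists u F, f u = EFin F /\ vnorm (vsub x0 u) < vnorm (vsub x0 xbar) / 2 /\
    F - fx <= c * (vnorm (vsub x0 xbar))^2 /\
    prox_subdiff f u (vscal (10 * r + 8) (vsub x0 u)).
Proof.
  intros Hc [Hrho1 Hrho2] E0 Hy0.
  set (rho := vnorm (vsub x0 xbar)) in *. set (L := 10 * r + 8).
  set (psi := fun y => L / 2 * dot (vsub y x0) (vsub y x0)).
  assert (Hminor := prox_reg_minorant n f xbar fx r eps Efx PR L0 Heps).
  destruct (lsc_min_on_ball n f psi xbar eps (fx - r / 2 * eps ^ 2)) as [u [F [Hu [EF Hmin]]]]; auto.
  - intros yk y Hy. apply CV_mult; [apply Un_cv_const|apply dot_cv; apply vcv_sub; auto using vcv_const].
  - intros y gy Hy Eg. specialize (Hminor y Hy). rewrite Eg in Hminor. cbn [ege] in Hminor.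
    assert (0 <= psi y) by (unfold psi, L; pose proof (dot_pos _ (vsub y x0)); nra).
    pose proof (vnorm_pos _ (vsub y xbar)).
    assert (vnorm (vsub y xbar) ^ 2 <= eps ^ 2) by nra. nra.
  - exists x0, y0. split; auto. fold rho. lra.
  - set (e := vnorm (vsub x0 u)).
    assert (Hpsi_u : psi u = L / 2 * (e * e)).
    { unfold psi, e. rewrite vnorm_sym, <- vnorm_sq. ring. }
    assert (Hx0 : F + psi u <= y0).
    { pose proof (Hmin x0 y0 ltac:(fold rho; lra) E0) as H. unfold psi at 2 in H.
      replace (vsub x0 x0) with (@vzero n) in H by (apply vec_eq; intros; unfold vsub, vzero; ring).
      rewrite dot_zerol in H. lra. }
    assert (HF : fx - r / 2 * (vnorm (vsub u xbar))^2 <= F)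
      by (specialize (Hminor u Hu); rewrite EF in Hminor; exact Hminor).
    assert (Htri : vnorm (vsub u xbar) <= e + rho)
      by (unfold e, rho; rewrite (vnorm_sym _ x0 u); apply vnorm_triangle).
    assert (He : e < rho / 2).
    { apply (proximal_step_estimate c r e rho (vnorm (vsub u xbar))); auto using vnorm_pos.
      change ((10 * r + 8) / 2 * (e * e)) with (L / 2 * (e * e)). lra. }
    assert (He0 : 0 <= e) by apply vnorm_pos.
    exists u, F. split; [exact EF|split; [exact He|split]].
    + assert (0 <= psi u) by (rewrite Hpsi_u; unfold L; nra). lra.
    + apply (ball_minimizer_prox_subgradient n f xbar x0 u eps L F); [lra|exact EF|].
      intros y gy Hy Eg. specialize (Hmin y gy Hy Eg). unfold psi in Hmin.
      replace (vsub u x0) with (vscal (-1) (vsub x0 u)) by (apply vec_eq; intros; unfold vsub, vscal; ring).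
      rewrite dot_scall, dot_scalr. replace (vsub u x0) with (vscal (-1) (vsub x0 u)) in Hmin
        by (apply vec_eq; intros; unfold vsub, vscal; ring).
      rewrite dot_scall, dot_scalr in Hmin. lra.
Qed.

Lemma small_subgradients_near_xbar c dl :
  ~ strong_local_min f xbar -> 0 < c <= 1 -> 0 < dl ->
  exists u v, 0 < vnorm (vsub u xbar) < dl /\ prox_subdiff f u v /\
    vnorm v <= (10 * r + 8) * vnorm (vsub u xbar) /\
    exists F, f u = EFin F /\ F - fx <= 4 * c * (vnorm (vsub u xbar))^2.
Proof.
  intros Hns Hc Hdl.
  destruct (bad_points_of_not_strong_min n f xbar fx c (Rmin (eps / 2) (dl / 2)) Efx Hns ltac:(lra))
    as [x0 [y0 [[H1 H2] [E0 Hy0]]]].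
  { apply Rmin_pos; lra. }
  pose proof (Rmin_l (eps / 2) (dl / 2)). pose proof (Rmin_r (eps / 2) (dl / 2)).
  destruct (proximal_point_near_bad_point c x0 y0 Hc ltac:(lra) E0 Hy0) as [u [F [EF [Hstep [HF Hp]]]]].
  set (rho := vnorm (vsub x0 xbar)) in *.
  assert (Hlo : rho / 2 <= vnorm (vsub u xbar)).
  { pose proof (vnorm_triangle _ x0 u xbar) as T. fold rho in T. lra. }
  assert (Hhi : vnorm (vsub u xbar) <= 3 * rho / 2).
  { pose proof (vnorm_triangle _ u x0 xbar) as T. rewrite (vnorm_sym _ u x0) in T. fold rho in T. lra. }
  exists u, (vscal (10 * r + 8) (vsub x0 u)). split; [lra|split; [exact Hp|split]].
  - rewrite vnorm_scal, Rabs_pos_eq by lra. apply Rmult_le_compat_l; lra.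
  - exists F. split; auto. assert (rho ^ 2 <= 4 * (vnorm (vsub u xbar))^2) by nra. nra.
Qed.

(* Necessity: at a strong local minimizer with modulus [kappa],
   [<z, w> = d^2 f(xbar|0)(w) >= kappa |w|^2]. *)
Lemma second_order_condition_of_strong_min :
  strong_local_min f xbar -> exists kappa, 0 < kappa /\ second_order_condition n f xbar kappa.
Proof.
  intros [fx1 [E1 [kappa [d0 [Hk [Hd0 Hmin]]]]]]. rewrite Efx in E1. injection E1 as <-.
  exists kappa. split; auto. intros w [z Hz] Hw1. exists z. split; auto.
  destruct (d2_exists n f xbar vzero fx w) as [a Ha].
  pose proof (d2_quadratic_minorant n f xbar fx kappa d0 w a Efx Hd0 Hmin TED Ha) as Hge.
  rewrite (d2_eq_dot_of_graph w z a Ha Hz) in Hge. simpl in Hge.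
  rewrite <- vnorm_sq, Hw1 in Hge. lra.
Qed.

(* Sufficiency, by contradiction: without strong minimality, proximal points
   of bad points yield a graphical-derivative pair [(w0, z0)] with [|w0| = 1]
   along which the quotients stay below [8 c <= kappa / 2]; but the condition
   provides [z1] with [d^2 f(xbar|0)(w0) = <z1, w0> >= kappa]. *)
Lemma strong_min_of_second_order_condition kappa :
  0 < kappa -> second_order_condition n f xbar kappa -> strong_local_min f xbar.
Proof.
  intros Hk Hcond. apply NNPP. intros Hns.
  set (c := Rmin (kappa / 16) 1).
  assert (Hc : 0 < c <= 1) by (split; [apply Rmin_pos; lra|apply Rmin_r]).
  assert (Hc2 : c <= kappa / 16) by apply Rmin_l.
  destruct (seq_choice (vec n * vec n) (fun j uv =>
      (0 < vnorm (vsub (fst uv) xbar) < / (INR j + 1)) /\ prox_subdiff f (fst uv) (snd uv) /\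
      vnorm (snd uv) <= (10 * r + 8) * vnorm (vsub (fst uv) xbar) /\
      exists F, f (fst uv) = EFin F /\ F - fx <= 4 * c * (vnorm (vsub (fst uv) xbar))^2)) as [uv Huv].
  { intros j. destruct (small_subgradients_near_xbar c (/ (INR j + 1)) Hns Hc) as [u [v H]].
    - apply Rinv_0_lt_compat. pose proof (pos_INR j). lra.
    - exists (u, v). exact H. }
  destruct (graph_pair_of_sequence n f xbar fx (fun j => fst (uv j)) (fun j => snd (uv j))
              (10 * r + 8) (4 * c) (fun j => proj1 (proj1 (Huv j))))
    as [t [wk [w0 [z0 [Htp [Htc [Hw [Hw1 [Hg Hq]]]]]]]]].
  - apply (Un_cv_squeeze _ (fun j => / (INR j + 1))); [|apply Un_cv_inv].
    intros j. destruct (Huv j) as [[h1 h2] _]. rewrite Rminus_0_r, Rabs_pos_eq; lra.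
  - intros j. apply Huv.
  - intros j. apply Huv.
  - intros j. apply Huv.
  - destruct (Hcond w0 (ex_intro _ z0 Hg) Hw1) as [z1 [Hz1 Hkz]].
    destruct (d2_exists n f xbar vzero fx w0) as [a Ha].
    rewrite (d2_eq_dot_of_graph w0 z1 a Ha Hz1) in Ha.
    destruct (d2_below_sequence n f xbar vzero fx w0 _ t wk (kappa / 2) Ha ltac:(simpl; lra) Htp Htc Hw)
      as [N HN].
    destruct (Hq N) as [P [EP HP]]. specialize (HN N (Nat.le_refl N)). rewrite EP in HN. simpl in HN.
    lra.
Qed.

End ProxRegularSetting.

Theorem corollary3p9 (n : nat) (f : vec n -> ereal) (xbar : vec n) :
  proper f -> lsc f -> in_dom f xbar -> lim_subdiff f xbar vzero ->
  subdiff_continuous f xbar vzero -> prox_regular f xbar vzero ->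
  twice_epi_diff f xbar vzero ->
  (strong_local_min f xbar <->
   exists kappa, 0 < kappa /\
     forall w, dom_graph_deriv_prox f xbar vzero w -> vnorm w = 1 ->
       exists z, graph_deriv_prox f xbar vzero w z /\ kappa <= dot z w).
Proof.
  intros _ Hlsc _ L0 SC [fx [Efx [r [eps [Hr [Heps PR]]]]]] TED. split.
  - exact (second_order_condition_of_strong_min n f xbar fx r eps Efx Heps PR L0 SC TED).
  - intros [kappa [Hk Hcond]].
    exact (strong_min_of_second_order_condition n f xbar fx r eps Efx Heps PR L0 SC TED
             (Rlt_le _ _ Hr) Hlsc kappa Hk Hcond).
Qed.
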